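(* Assume $\overline{c}>p$. Then there exist constants $K_2>0$ and $K_3>0$ such that $$V(x_2,c)-V(x_1,c)\le\left[K_2+\frac{K_3}{c-p}\right](x_2-x_1)$$ for all $0\le x_1\le x_2$ and $p<c\le\overline{c}$.
   Context: Cramér–Lundberg model: the uncontrolled surplus is $X_t=x+pt-\sum_{i=1}^{N_t}U_i$, where $x\ge0$ is the initial surplus, $p>0$ the premium rate, $N_t$ a Poisson process with intensity $\beta>0$, and the claims $U_i$ are i.i.d. positive random variables, independent of $N$, with continuous distribution function $F$; $p>\beta\mathbb{E}[U_1]$. Standing assumption (A1): $F$ is globally Lipschitz, $0\le F(y)-F(x)\le K(y-x)$ for $x<y$. Let $(\mathcal{F}_t)$ be the completed filtration generated by $X$. Fix $\overline{c}>0$ and $q>0$. $\Pi_{x,c,\overline{c}}$ is the set of càdlàg, adapted, non-decreasing processes $C$ with $c\le C_t\le\overline{c}$; $X^C_t=X_t-\int_0^tC_sds$ ($X_0=x$), $\tau=\inf\{t\ge0:X^C_t<0\}$, $J(x;C)=\mathbb{E}[\int_0^\tau e^{-qs}C_sds]$, $V(x,c)=\sup_{C\in\Pi_{x,c,\overline{c}}}J(x;C)$. *)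

From HB Require Import structures.
From mathcomp Require Import all_boot all_order all_algebra.
From mathcomp Require Import all_classical all_reals all_analysis.
Set Implicit Arguments. Unset Strict Implicit. Unset Printing Implicit Defensive.
Import Order.TTheory GRing.Theory Num.Theory.
Import numFieldNormedType.Exports.
Local Open Scope classical_set_scope.
Local Open Scope ring_scope.

Section CL.
Context {d : measure_display} {T : measurableType d} {R : realType}.
Variable (P : probability T R).

Definition mutually_independent (I : eqType) (Y : I -> T -> R) : Prop :=
  forall (s : seq I) (B : I -> set R), uniq s -> (forall i, measurable (B i)) ->
    P (\big[setI/setT]_(i <- s) (Y i @^-1` B i)) =
    (\prod_(i <- s) P (Y i @^-1` B i))%E.

(* Arrival time of the (n+1)-th claim: S_{n+1} = E_0 + ... + E_n
   (E = i.i.d. exponential inter-arrival times of the Poisson process N). *)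
Definition arrival (E : nat -> T -> R) (n : nat) (w : T) : R :=
  \sum_(i < n.+1) E i w.

(* Aggregate claims  \sum_{i=1}^{N_t} U_i = \sum_n 1{S_{n+1} <= t} U_{n+1}. *)
Definition agg_claims (E U : nat -> T -> R) (t : R) (w : T) : R :=
  limn (fun m => \sum_(i < m) (((arrival E i w <= t)%R : bool)%:R * U i w)).

Definition surplus (E U : nat -> T -> R) (x p t : R) (w : T) : R :=
  x + p * t - agg_claims E U t w.

Definition natural_sigma (X : R -> T -> R) (t : R) : set (set T) :=
  <<s [set A | exists s, 0 <= s <= t /\ exists B, measurable B /\ A = X s @^-1` B] >>.

Definition completed_filtration (X : R -> T -> R) (t : R) : set (set T) :=
  [set A | exists2 B, natural_sigma X t B &
     exists N, [/\ measurable N, P N = 0%E & (A `\` B) `|` (B `\` A) `<=` N]].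

Definition admissible (E U : nat -> T -> R) (x p c cbar : R) (C : R -> T -> R) : Prop :=
  [/\
      (forall t, 0 <= t -> forall B : set R, measurable B ->
         completed_filtration (surplus E U x p) t (C t @^-1` B)),
      (forall w t, 0 <= t -> (fun s => C s w) @ at_right t --> C t w),
      (forall w t, 0 < t -> cvg ((fun s => C s w) @ at_left t)),
      (forall w s t, 0 <= s -> s <= t -> C s w <= C t w) &
      (forall w t, 0 <= t -> c <= C t w <= cbar)].

Definition controlled_surplus (E U : nat -> T -> R) (x p : R) (C : R -> T -> R)
    (t : R) (w : T) : R :=
  surplus E U x p t w - Rintegral lebesgue_measure `[0, t] (fun s => C s w).

Definition ruin_time (E U : nat -> T -> R) (x p : R) (C : R -> T -> R) (w : T)
  : \bar R :=
  ereal_inf [set t%:E | t in [set t | 0 <= t /\ controlled_surplus E U x p C t w < 0]].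

Definition payoff (E U : nat -> T -> R) (x p q : R) (C : R -> T -> R) : \bar R :=
  (\int[P]_w (\int[lebesgue_measure]_(s in [set s : R | (0 <= s)%R /\ (s%:E < ruin_time E U x p C w)%E])
               ((expR (- (q * s)) * C s w)%R)%:E))%E.

Definition value_fun (E U : nat -> T -> R) (p q cbar x c : R) : \bar R :=
  ereal_sup [set payoff E U x p q C | C in admissible E U x p c cbar].

End CL.

(* Admissibility of a control does not depend on the initial surplus, so a
   control C admissible from x2 is admissible from x1.  On almost every path
   the claim arrival times tend to infinity; there the controlled surplus
   decreases at rate at least c - p, so starting from x2 instead of x1 delays
   ruin by at most (x2 - x1) / (c - p), during which at most cbar is paid per
   unit of time.  Hence J(x2; C) <= J(x1; C) + cbar (x2 - x1) / (c - p), and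
   the bound holds with K2 = 1 and K3 = cbar. *)

From HB Require Import structures.
From mathcomp Require Import all_boot all_order all_algebra.
From mathcomp Require Import all_classical all_reals all_analysis.
From mathcomp Require Import lra ring measurable_realfun.
Set Implicit Arguments.
Unset Strict Implicit.
Unset Printing Implicit Defensive.

Import Order.TTheory GRing.Theory Num.Theory.
Import numFieldNormedType.Exports.
Local Open Scope classical_set_scope.
Local Open Scope ring_scope.

Lemma bounded_integrable_itv (R : realType) (f : R -> R) (b1 b2 : bool) (a b M : R) :
  measurable_fun [set: R] f -> (forall x, `|f x| <= M) ->
  lebesgue_measure.-integrable [set` Interval (BSide b1 a) (BSide b2 b)] (EFin \o f).
Proof.
move=> mf fM; apply: measurable_bounded_integrable => //.
- rewrite [X in (X < _)%E](_ : _ = (if a < b then b - a else 0)%:E) ?ltry //.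
  by apply: (etrans (lebesgue_measure_itv _)) => /=; rewrite lte_fin; case: ifP.
- exact: measurable_funS mf.
exists M; split; first exact: num_real.
by move=> M' MM' x _ /=; exact: le_trans (fM x) (ltW MM').
Qed.

Lemma lebesgue_measure_itv_len (R : realType) (b1 b2 : bool) (a b : R) : a <= b ->
  lebesgue_measure [set` Interval (BSide b1 a) (BSide b2 b)] = (b - a)%:E.
Proof.
move=> ab; apply: (etrans (lebesgue_measure_itv _)) => /=.
rewrite lte_fin -EFinB; case: ltgtP ab => // -> _.
by rewrite subrr.
Qed.

Definition discounted_integral {R : realType} (q : R) (C : R -> R) (tau : \bar R) : \bar R :=
  (\int[lebesgue_measure]_(s in [set s : R | (0 <= s)%R /\ (s%:E < tau)%E])
     (expR (- (q * s)) * C s)%:E)%E.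

Lemma measurable_before (R : realType) (tau : \bar R) :
  measurable [set s : R | 0 <= s /\ (s%:E < tau)%E].
Proof.
case: tau => [r| |].
- rewrite (_ : [set s | _] = `[0, r[%classic); first exact: measurable_itv.
  by apply/seteqP; split => s /=; rewrite in_itv /= lte_fin => /andP.
- rewrite (_ : [set s | _] = `[0, +oo[%classic); first exact: measurable_itv.
  by apply/seteqP; split => s /=; rewrite in_itv /= ?andbT ?ltry => -[].
- by rewrite (_ : [set s | _] = set0) //; apply/seteqP; split => s //= -[].
Qed.

Section bounded_nondecreasing_control.
Variables (R : realType) (c cbar : R) (C : R -> R).
Hypothesis c_ge0 : 0 <= c.
Hypothesis C_bound : forall s, 0 <= s -> c <= C s <= cbar.
Hypothesis C_nondecr : forall s t, 0 <= s -> s <= t -> C s <= C t.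

(* [C] only matters on [0, +oo[; extending it by [C 0] to the left makes it
   nondecreasing, hence measurable, on the whole line. *)
Let Cext (s : R) : R := C (Num.max s 0).

Let Cext_bound s : c <= Cext s <= cbar.
Proof. by apply: C_bound; rewrite le_max lexx orbT. Qed.

Let Cext_ge0 s : 0 <= Cext s.
Proof. by have /andP[cC _] := Cext_bound s; exact: le_trans c_ge0 cC. Qed.

Let cbar_ge0 : 0 <= cbar.
Proof. by have /andP[_] := Cext_bound 0; exact: le_trans (Cext_ge0 0). Qed.

Let measurable_Cext : measurable_fun [set: R] Cext.
Proof.
apply: nondecreasing_measurable => // s t st; apply: C_nondecr.
  by rewrite le_max lexx orbT.
by rewrite ge_max !le_max st lexx !orbT.
Qed.

Let Cext_id s : 0 <= s -> Cext s = C s.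
Proof. by move=> s0; rewrite /Cext max_l. Qed.

Lemma Rintegral_increment_ge t t' : 0 <= t -> t <= t' ->
  c * (t' - t) <=
  \int[lebesgue_measure]_(s in `[0, t']) C s - \int[lebesgue_measure]_(s in `[0, t]) C s.
Proof.
move=> t0 tt'.
have int_Cext u : \int[lebesgue_measure]_(s in `[0, u]) C s =
    \int[lebesgue_measure]_(s in `[0, u]) Cext s.
  by apply: eq_Rintegral => s /[!inE] /=; rewrite in_itv /= => /andP[/Cext_id ->].
rewrite !int_Cext.
have Cext_abs s : `|Cext s| <= cbar.
  by rewrite ger0_norm //; have /andP[] := Cext_bound s.
rewrite Rintegral_itvB ?bnd_simp //; last exact: bounded_integrable_itv Cext_abs.
rewrite -[c * _](_ : \int[lebesgue_measure]_(s in `]t, t']) c = _); last first.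
  rewrite Rintegral_cst // [X in fine X](_ : _ = (t' - t)%:E) //.
  exact: lebesgue_measure_itv_len.
apply: le_Rintegral => //.
- by apply: (@bounded_integrable_itv _ _ _ _ _ _ `|c|) => //; exact: measurable_cst.
- exact: bounded_integrable_itv Cext_abs.
by move=> s _; have /andP[] := Cext_bound s.
Qed.

Variable q : R.
Hypothesis q_ge0 : 0 <= q.

Let g (s : R) : \bar R := (expR (- (q * s)) * Cext s)%:E.

Let discounted_integral_Cext tau : discounted_integral q C tau =
  (\int[lebesgue_measure]_(s in [set s : R | (0 <= s)%R /\ (s%:E < tau)%E]) g s)%E.
Proof. by apply: eq_integral => s /[!inE] -[s0 _]; rewrite /g Cext_id. Qed.

Let measurable_g : measurable_fun [set: R] g.
Proof.
apply/measurable_EFinP/measurable_funM => //.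
by apply: nonincreasing_measurable => // s t st; rewrite ler_expR lerN2 ler_wpM2l.
Qed.

Let g_ge0 s : (0 <= g s)%E.
Proof. by rewrite lee_fin mulr_ge0 ?expR_ge0. Qed.

Let g_le s : 0 <= s -> (g s <= cbar%:E)%E.
Proof.
move=> s0; have /andP[_ Cs] := Cext_bound s.
rewrite lee_fin -[cbar]mul1r ler_pM ?expR_ge0 //.
by rewrite expR_le1 oppr_le0 mulr_ge0.
Qed.

Let integral_g_itv_le (r a : R) : 0 <= r -> 0 <= a ->
  (\int[lebesgue_measure]_(s in `[r, (r + a)%R[%classic) g s <= (cbar * a)%:E)%E.
Proof.
move=> r0 a0.
apply: (@le_trans _ _
  (\int[lebesgue_measure]_(s in `[r, (r + a)%R[%classic) (cst cbar%:E) s)%E).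
  apply: ge0_le_integral => //; first exact: measurable_funS measurable_g.
  by move=> s /=; rewrite in_itv /= => /andP[rs _]; apply/g_le/(le_trans r0 rs).
rewrite integral_cst // [X in (_ * X)%E](_ : _ = ((r + a) - r)%:E).
  by rewrite -EFinM addrC addKr.
by apply: lebesgue_measure_itv_len; rewrite lerDl.
Qed.

Lemma discounted_integral_delay (a : R) (tau1 tau2 : \bar R) : 0 <= a ->
  (0 <= tau1)%E -> (tau2 <= tau1 + a%:E)%E ->
  (discounted_integral q C tau2 <= discounted_integral q C tau1 + (cbar * a)%:E)%E.
Proof.
move=> a0 tau1_ge0 tau21; rewrite !discounted_integral_Cext.
move: tau1_ge0 tau21; case: tau1 => [r| |] // r0 tau21; last first.
  apply: le_trans (leeDl _ _); last by rewrite lee_fin mulr_ge0.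
  apply: ge0_subset_integral => //; try exact: measurable_before.
  - exact: measurable_funS measurable_g.
  - by move=> s [s0 _]; split => //; rewrite ltry.
set D := [set s : R | 0 <= s /\ (s%:E < r%:E)%E].
have mD : measurable D by exact: measurable_before.
have mI : measurable (`[r, r + a[%classic : set R) by exact: measurable_itv.
have tau2_split :
    (\int[lebesgue_measure]_(s in [set s : R | (0 <= s)%R /\ (s%:E < tau2)%E]) g s <=
    \int[lebesgue_measure]_(s in D `|` `[r, (r + a)%R[%classic) g s)%E.
  apply: ge0_subset_integral => //; first exact: measurable_before.
  - exact: measurableU.
  - exact: measurable_funS measurable_g.
  move=> s [s0 st2]; have [sr|rs] := ltP s r; first by left; split => //; rewrite lte_fin.
  by right; rewrite /= in_itv /= rs /= -lte_fin EFinD; exact: lt_le_trans st2 tau21.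
apply: le_trans tau2_split _; rewrite ge0_integral_setU //; first last.
- rewrite disj_set2E; apply/eqP/seteqP; split => // s [[_ +] /=].
  by rewrite in_itv /= lte_fin => sr /andP[rs _]; move: (lt_le_trans sr rs); rewrite ltxx.
- exact: measurable_funS measurable_g.
by rewrite leeD2l // integral_g_itv_le // -lee_fin.
Qed.

End bounded_nondecreasing_control.

Definition first_negative_time {R : realType} (X : R -> R) : \bar R :=
  ereal_inf [set t%:E | t in [set t | 0 <= t /\ X t < 0]].

Lemma first_negative_time_ge0 (R : realType) (X : R -> R) : (0 <= first_negative_time X)%E.
Proof. by apply: le_ereal_inf_tmp => _ [t [t0 _] <-]; rewrite lee_fin. Qed.

Lemma first_negative_time_shift (R : realType) (X : R -> R) (kappa h : R) :
  0 < kappa -> 0 <= h ->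
  (forall t t', 0 <= t -> t <= t' -> X t' <= X t - kappa * (t' - t)) ->
  (first_negative_time (fun t => (X t + h)%R) <= first_negative_time X + (h / kappa)%:E)%E.
Proof.
move=> kappa_gt0 h0 decay.
have := first_negative_time_ge0 X.
case E_tau : (first_negative_time X) => [r| |] // _; last by rewrite addye // leey.
apply/lee_addgt0Pr => e e0.
have /ereal_inf_lt[_ [t [t0 Xt] <-]] : (first_negative_time X < (r + e)%:E)%E.
  by rewrite E_tau lte_fin ltrDl.
rewrite lte_fin => t_lt.
have hk0 : 0 <= h / kappa by rewrite divr_ge0 // ltW.
apply: (@le_trans _ _ (t + h / kappa)%:E).
  apply: ereal_inf_lbound; exists (t + h / kappa) => //; split; first exact: addr_ge0.
  have := decay t (t + h / kappa) t0; rewrite lerDl => /(_ hk0).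
  by rewrite addrAC subrr add0r mulrCA divff ?gt_eqF // mulr1; lra.
by rewrite -!EFinD lee_fin; lra.
Qed.

Lemma series_unbounded (R : realType) (u : R ^nat) :
  (forall n, 0 <= u n) -> (forall n, exists2 i, (n <= i)%N & 1 < u i) ->
  forall t, exists n, t < series u n.
Proof.
move=> u_ge0 u_gt1 t; apply: contrapT => series_small.
have series_le n : series u n <= t.
  by rewrite leNgt; apply/negP => tn; apply: series_small; exists n.
have /cvg_series_cvg_0 u_to0 : cvgn (series u).
  apply: nondecreasing_is_cvgn; first exact: nondecreasing_series.
  by exists t => _ [n _ <-].
have [N _ u_lt1] := cvgr_lt _ u_to0 _ ltr01.
have [i Ni] := u_gt1 N; apply/negP; rewrite -leNgt ltW //.
exact: u_lt1.
Qed.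

Section claims.
Context {d : measure_display} {T : measurableType d} {R : realType}.
Variables (E U : nat -> T -> R).

Definition arrivals_unbounded (w : T) : Prop :=
  forall t : R, exists n0, forall n, (n0 <= n)%N -> t < arrival E n w.

Lemma arrival_series n w : arrival E n w = series (E ^~ w) n.+1.
Proof. by rewrite /arrival /series /= big_mkord. Qed.

Lemma arrivals_unboundedP w : (forall n, 0 <= E n w) ->
  (forall n, exists2 i, (n <= i)%N & 1 < E i w) -> arrivals_unbounded w.
Proof.
move=> E_ge0 E_gt1 t; have [n tn] := series_unbounded E_ge0 E_gt1 t.
exists n => m nm; apply: lt_le_trans tn _; rewrite arrival_series.
by move: (leqW nm); apply: nondecreasing_series => k _ _; exact: E_ge0.
Qed.

Lemma agg_claims_finite n0 t w : (forall n, (n0 <= n)%N -> t < arrival E n w) ->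
  agg_claims E U t w = \sum_(i < n0) (((arrival E i w <= t)%R : bool)%:R * U i w).
Proof.
move=> late; pose F j := ((arrival E j w <= t)%R : bool)%:R * U j w.
have stable m : (n0 <= m)%N -> \sum_(i < m) F i = \sum_(i < n0) F i.
  move=> n0m; rewrite [RHS](big_ord_widen m _ n0m) [RHS]big_mkcond /=.
  apply: eq_bigr => i _; case: ltnP => // n0i.
  by rewrite /F leNgt late //= mul0r.
apply: lim_near_cst => //; near=> m; apply: stable.
by near: m; exists n0.
Unshelve. all: by end_near.
Qed.

Lemma agg_claims_nondecreasing t t' w : arrivals_unbounded w ->
  (forall i, 0 <= U i w) -> t <= t' -> agg_claims E U t w <= agg_claims E U t' w.
Proof.
move=> unb U_ge0 tt'; have [n0 late] := unb t'.
rewrite (agg_claims_finite (fun n n0n => le_lt_trans tt' (late n n0n))).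
rewrite (agg_claims_finite late); apply: ler_sum => i _.
apply: ler_wpM2r => //; case: (boolP (arrival E i w <= t)) => [ait|_].
  by rewrite (le_trans ait tt').
by rewrite ler0n.
Qed.

Lemma ruin_timeE x p C w :
  ruin_time E U x p C w = first_negative_time (fun t => controlled_surplus E U x p C t w).
Proof. by []. Qed.

Section control_path.
Variables (x p c cbar : R) (C : R -> T -> R) (w : T).
Hypotheses (unb : arrivals_unbounded w) (U_ge0 : forall i, 0 <= U i w).
Hypothesis c_ge0 : 0 <= c.
Hypothesis C_bound : forall s, 0 <= s -> c <= C s w <= cbar.
Hypothesis C_nondecr : forall s t, 0 <= s -> s <= t -> C s w <= C t w.

(* Between claims the surplus grows at rate [p] and the control pays at rate
   at least [c]; claims only decrease it. *)
Lemma controlled_surplus_decay t t' : 0 <= t -> t <= t' ->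
  controlled_surplus E U x p C t' w <=
  controlled_surplus E U x p C t w - (c - p) * (t' - t).
Proof.
move=> t0 tt'.
have := Rintegral_increment_ge c_ge0 C_bound C_nondecr t0 tt'.
have := agg_claims_nondecreasing unb U_ge0 tt'.
rewrite /controlled_surplus /surplus; lra.
Qed.

Lemma ruin_time_shift x' : p < c -> x <= x' ->
  (ruin_time E U x' p C w <= ruin_time E U x p C w + ((x' - x) / (c - p))%:E)%E.
Proof.
move=> pc xx'.
have shift t : controlled_surplus E U x' p C t w =
    controlled_surplus E U x p C t w + (x' - x).
  by rewrite /controlled_surplus /surplus; lra.
rewrite !ruin_timeE (eq_fun shift).
apply: first_negative_time_shift; rewrite ?subr_gt0 ?subr_ge0 //.
exact: controlled_surplus_decay.
Qed.

End control_path.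

End claims.

Lemma measurable_sublevel d (T : measurableType d) (R : realType) (X : T -> R) (y : R) :
  measurable_fun [set: T] X -> measurable [set w | X w <= y].
Proof.
move=> mX; rewrite (_ : [set w | _] = [set: T] `&` X @^-1` `]-oo, y]).
  by apply: mX => //; exact: measurable_itv.
by apply/seteqP; split => w /=; rewrite in_itv /= ?andbT //; move=> [_ ->].
Qed.

Lemma le_expr_lt1_eq0 (R : realType) (x rho : R) : 0 <= x -> 0 <= rho -> rho < 1 ->
  (forall m, x <= rho ^+ m) -> x = 0.
Proof.
move=> x0 rho0 rho1 x_le; apply/eqP; rewrite eq_le x0 andbT.
have rho_pow_to0 : rho ^+ m @[m --> \oo] --> 0 by apply: cvg_expr; rewrite ger0_norm.
rewrite -(cvg_lim _ rho_pow_to0) //; apply: limr_ge; first exact: cvgP rho_pow_to0.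
by near=> m; exact: x_le.
Unshelve. all: by end_near.
Qed.

Section negligible_events.
Context {d : measure_display} {T : measurableType d} {R : realType}.
Variable P : probability T R.

Lemma negligible_lt0 (X : T -> R) : measurable_fun [set: T] X ->
  (forall y, y < 0 -> P [set w | X w <= y] = 0%E) -> P.-negligible [set w | X w < 0].
Proof.
move=> mX cdf0.
apply: (@negligibleS _ _ _ _ (\bigcup_k [set w | X w <= - k.+1%:R^-1])).
  move=> w /= Xw; exists (Num.Def.archi_bound (- X w)^-1) => //=.
  have Xw_inv_gt0 : 0 < (- X w)^-1 by rewrite invr_gt0 oppr_gt0.
  have := archi_boundP (ltW Xw_inv_gt0); set k := Num.Def.archi_bound _ => Xw_lt_k.
  rewrite lerNr -[- X w]invrK lef_pV2 ?posrE ?invr_gt0 ?oppr_gt0 ?ltr0Sn //.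
  by apply/ltW/(lt_le_trans Xw_lt_k); rewrite ler_nat.
apply: negligible_bigcup => k; exists [set w | X w <= - k.+1%:R^-1]; split.
- exact: measurable_sublevel.
- by apply: cdf0; rewrite oppr_lt0 invr_gt0.
- by [].
Qed.

Lemma independent_eventually_negligible (I : eqType) (Y : I -> T -> R) (f : nat -> I)
    (B : set R) (rho : R) :
  mutually_independent P Y -> injective f -> measurable B ->
  (forall n, measurable_fun [set: T] (Y (f n))) ->
  (forall n, P (Y (f n) @^-1` B) = rho%:E) -> rho < 1 ->
  P.-negligible [set w | exists n, forall i, (n <= i)%N -> B (Y (f i) w)].
Proof.
move=> indep inj_f mB mY PB rho_lt1.
have mYB n : measurable (Y (f n) @^-1` B).
  by rewrite -[_ @^-1` _]setTI; exact: mY.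
have rho_ge0 : 0 <= rho by rewrite -lee_fin -(PB 0%N).
pose A n := \bigcap_(i in [set i | (n <= i)%N]) Y (f i) @^-1` B.
have mA n : measurable (A n) by exact: bigcap_measurableType.
have PA_le n m : (P (A n) <= (rho ^+ m)%:E)%E.
  have -> : (rho ^+ m)%:E = P (\big[setI/setT]_(j <- iota n m) Y (f j) @^-1` B).
    rewrite -(big_map f xpredT (fun i => Y i @^-1` B)) indep ?map_inj_uniq ?iota_uniq //.
    rewrite big_map (eq_bigr _ (fun j _ => PB j)) prodEFin.
    by rewrite big_const_seq count_predT size_iota iter_mulr_1.
  apply: le_measure; rewrite ?inE //; first exact: bigsetI_measurable.
  rewrite big_seq; apply: (big_ind (fun S => A n `<=` S)) => //.
    by move=> S1 S2 AS1 AS2 w Aw; split; [exact: AS1 | exact: AS2].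
  by move=> j; rewrite mem_iota => /andP[nj _] w Aw; exact: Aw.
have PA0 n : P (A n) = 0%E.
  have PA_fin : P (A n) \is a fin_num.
    by rewrite ge0_fin_numE // (le_lt_trans (PA_le n 0%N)) ?ltry.
  rewrite -(fineK PA_fin) (le_expr_lt1_eq0 (fine_ge0 _) rho_ge0 rho_lt1) // => m.
  by rewrite -lee_fin fineK.
apply: (@negligibleS _ _ _ _ (\bigcup_n A n)).
  by move=> w [n Bn]; exists n => // i; exact: Bn.
by apply: negligible_bigcup => n; exists (A n); split => //; exact: PA0.
Qed.

Lemma arrivals_unbounded_ae (beta : R) (E U : nat -> T -> R) : 0 < beta ->
  (forall n, measurable_fun [set: T] (E n)) ->
  (forall n y, P [set w | E n w <= y] =
            (if 0 <= y then 1 - expR (- (beta * y)) else 0)%:E) ->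
  mutually_independent P (fun i : nat + nat => match i with inl n => E n | inr n => U n end) ->
  P.-negligible [set w | ~ arrivals_unbounded E w].
Proof.
move=> beta_gt0 mE cdfE indep.
have E_ge0 n : P.-negligible [set w | E n w < 0].
  by apply: negligible_lt0 => // y y0; rewrite cdfE ifF // leNgt y0.
have E_eventually_le1 : P.-negligible [set w | exists n, forall i, (n <= i)%N -> E i w <= 1].
  apply: (negligibleS _ (independent_eventually_negligible (f := inl)
    (B := `]-oo, 1]%classic) (rho := 1 - expR (- beta)) indep _ _ _ _ _)).
  - by move=> w [n le1]; exists n => i ni; rewrite /= in_itv /= le1.
  - by move=> ? ? [].
  - exact: measurable_itv.
  - exact: mE.
  - move=> n; rewrite (_ : _ @^-1` _ = [set w | E n w <= 1]).
      by rewrite cdfE ler01 mulr1.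
    by apply/seteqP; split => w /=; rewrite in_itv.
  - by rewrite gtrBl expR_gt0.
apply: (negligibleS _ (negligibleU (negligible_bigcup E_ge0) E_eventually_le1)).
move=> w unb; apply: contrapT => /not_orP[E_ge0' E_le1']; apply: unb.
apply: arrivals_unboundedP => n.
  by rewrite leNgt; apply/negP => En; apply: E_ge0'; exists n.
apply: contrapT => no_gt1; apply: E_le1'; exists n => i ni.
by rewrite leNgt; apply/negP => Ei; apply: no_gt1; exists i.
Qed.

End negligible_events.

(* The integrands of [payoff] are not known to be measurable, so the
   comparison of integrals goes through the definition of the integral of a
   nonnegative function as a supremum over simple functions. *)
Section integralT_nonmeasurable.
Context {d : measure_display} {T : measurableType d} {R : realType}.
Local Open Scope ereal_scope.
Import HBNNSimple.

Lemma ge0_le_integralT (mu : {measure set T -> \bar R}) (f g : T -> \bar R) :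
  (forall w, 0 <= f w) -> (forall w, 0 <= g w) -> (forall w, f w <= g w) ->
  \int[mu]_w f w <= \int[mu]_w g w.
Proof.
move=> f0 g0 fg; rewrite (ge0_integralTE _ f0) (ge0_integralTE _ g0).
apply: ereal_sup_le => _ [h hf <-]; exists h => //= w.
exact: le_trans (hf w) (fg w).
Qed.

Lemma ge0_ae_le_integralT_addr (P : probability T R) (f g : T -> \bar R) (k : R) (N : set T) :
  (forall w, 0 <= f w) -> (forall w, 0 <= g w) -> (0 <= k)%R ->
  P.-negligible N -> (forall w, ~ N w -> g w <= f w + k%:E) ->
  \int[P]_w g w <= \int[P]_w f w + k%:E.
Proof.
move=> f0 g0 k0 [A [mA PA NA]] gf.
rewrite (ge0_integralTE _ g0); apply: ge_ereal_sup => _ [h hg <-].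
rewrite -integralT_nnsfun.
pose psi w := ((fun w => h w - k)^\+ w * \1_(~` A) w)%R.
have mpsi : measurable_fun setT psi.
  apply: measurable_funM; first exact/measurable_funrpos/measurable_funB.
  exact/measurable_indic/measurableC.
have psi0 w : (0 <= psi w)%R by rewrite mulr_ge0 ?funrpos_ge0 // indicE.
have h_le : \int[P]_w (h w)%:E <= \int[P]_w ((psi w)%:E + k%:E).
  apply: ae_ge0_le_integral => //.
  - by move=> w _; rewrite lee_fin.
  - exact/measurable_EFinP/measurable_funPT.
  - by move=> w _; rewrite adde_ge0 // lee_fin.
  - by apply: emeasurable_funD; [exact/measurable_EFinP | exact: measurable_cst].
  exists A; split => // w /= hw; apply: contra_notP hw => Aw _.
  rewrite /psi indicE mem_set //.
  by rewrite mulr1 -EFinD lee_fin -lerBlDr /funrpos le_max lexx.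
apply: le_trans h_le _.
rewrite ge0_integralD //; last 2 first.
- by move=> w _; rewrite lee_fin.
- exact/measurable_EFinP.
rewrite integral_cst // (_ : _ * _ = k%:E); last first.
  by rewrite -[RHS]mule1; congr (_ * _); exact: probability_setT.
rewrite leeD2r //.
apply: ge0_le_integralT => // w; rewrite /psi indicE.
have [Aw|Aw] := boolP (w \in ~` A); last by rewrite mulr0.
rewrite mulr1 /funrpos EFin_max ge_max f0 andbT EFinB leeBlDr //.
apply: le_trans (hg w) (gf w _) => Nw.
by move: Aw; rewrite inE /=; apply; exact: NA.
Qed.

End integralT_nonmeasurable.

Section admissible_shift.
Context {d : measure_display} {T : measurableType d} {R : realType}.

Lemma natural_sigma_shift (X Y : R -> T -> R) (h : R) t :
  (forall s w, Y s w = X s w + h) -> natural_sigma Y t `<=` natural_sigma X t.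
Proof.
move=> YE; apply: smallest_sub; first exact: smallest_sigma_algebra.
move=> _ [s [s0 [B [mB ->]]]]; apply: sub_sigma_algebra; exists s; split => //.
exists ((fun y => y + h) @^-1` B); split.
  by rewrite -[X in measurable X]setTI; apply: measurable_funD => //; exact: measurable_cst.
by apply/seteqP; split => w /=; rewrite YE.
Qed.

Lemma admissible_shift (P : probability T R) (E U : nat -> T -> R) x1 x2 p c cbar C :
  admissible P E U x2 p c cbar C -> admissible P E U x1 p c cbar C.
Proof.
case=> adapted right_cont left_lim nondecr bound; split => // t t0 B mB.
have [A sigmaA [N [mN PN AN]]] := adapted t t0 B mB.
exists A; last by exists N.
apply: (natural_sigma_shift (h := x2 - x1)) sigmaA => s w.
by rewrite /surplus; lra.
Qed.

End admissible_shift.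

Section payoff_comparison.
Context {d : measure_display} {T : measurableType d} {R : realType}.
Variables (P : probability T R) (beta p q cbar : R) (E U : nat -> T -> R).
Hypotheses (beta_gt0 : 0 < beta) (p_ge0 : 0 <= p) (q_ge0 : 0 <= q).
Hypothesis mE : forall n, measurable_fun [set: T] (E n).
Hypothesis cdfE : forall n y, P [set w | E n w <= y] =
  (if 0 <= y then 1 - expR (- (beta * y)) else 0)%:E.
Hypothesis U_gt0 : forall n w, 0 < U n w.
Hypothesis indep : mutually_independent P
  (fun i : nat + nat => match i with inl n => E n | inr n => U n end).

Lemma payoffE x C :
  payoff P E U x p q C = (\int[P]_w discounted_integral q (C ^~ w) (ruin_time E U x p C w))%E.
Proof. by []. Qed.

Lemma payoff_shift_le x1 x2 c C : x1 <= x2 -> p < c -> c <= cbar ->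
  admissible P E U x2 p c cbar C ->
  (payoff P E U x2 p q C <= payoff P E U x1 p q C + (cbar * ((x2 - x1) / (c - p)))%:E)%E.
Proof.
move=> x12 pc ccbar [_ _ _ C_nondecr C_bound].
have c_ge0 : 0 <= c by apply: le_trans p_ge0 (ltW pc).
have delay_ge0 : 0 <= (x2 - x1) / (c - p) by rewrite divr_ge0 // subr_ge0 // ltW.
have integrand_ge0 x w : (0 <= discounted_integral q (C ^~ w) (ruin_time E U x p C w))%E.
  apply: integral_ge0 => s [s0 _]; rewrite lee_fin mulr_ge0 ?expR_ge0 //.
  by have /andP[/(le_trans c_ge0)] := C_bound w s s0.
rewrite !payoffE.
apply: ge0_ae_le_integralT_addr (arrivals_unbounded_ae beta_gt0 mE cdfE indep) _.
- exact: integrand_ge0.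
- exact: integrand_ge0.
- by rewrite mulr_ge0 // (le_trans c_ge0).
move=> w /contrapT unb.
have U_ge0 i : 0 <= U i w by exact: ltW.
apply: (discounted_integral_delay c_ge0 (C_bound w) (C_nondecr w) q_ge0 delay_ge0).
  by rewrite ruin_timeE first_negative_time_ge0.
exact: ruin_time_shift unb U_ge0 c_ge0 (C_bound w) (C_nondecr w) _ pc x12.
Qed.

Lemma value_fun_shift_le x1 x2 c : x1 <= x2 -> p < c -> c <= cbar ->
  (value_fun P E U p q cbar x2 c <=
   value_fun P E U p q cbar x1 c + (cbar * ((x2 - x1) / (c - p)))%:E)%E.
Proof.
move=> x12 pc ccbar; apply: ge_ereal_sup => _ [C C_adm <-].
apply: le_trans (payoff_shift_le x12 pc ccbar C_adm) _; rewrite leeD2r //.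
by apply: ereal_sup_ubound; exists C => //; exact: admissible_shift C_adm.
Qed.

End payoff_comparison.

(* Also true for infinite [y], since [+oo + -oo = -oo] in [\bar R]. *)
Lemma leeBlDr_EFin (R : realType) (x y : \bar R) (r : R) :
  (x <= y + r%:E)%E -> (x - y <= r%:E)%E.
Proof.
case: y => [y| |].
- by rewrite leeBlDl.
- by rewrite addeNy leNye.
- by rewrite addNye leeNy_eq => /eqP ->; rewrite addNye leNye.
Qed.

Theorem lemma9p3 (d : measure_display) (T : measurableType d) (R : realType)
  (P : probability T R) (beta p q cbar : R) (E U : nat -> T -> R) (F : R -> R)
  (hbeta : 0 < beta) (hp : 0 < p) (hq : 0 < q)
  (hEm : forall n, measurable_fun setT (E n))
  (hUm : forall n, measurable_fun setT (U n))
  (hEexp : forall n y, P [set w | E n w <= y] =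
            (if 0 <= y then 1 - expR (- (beta * y)) else 0)%:E)
  (hUF : forall n y, P [set w | U n w <= y] = (F y)%:E)
  (hUpos : forall n w, 0 < U n w)
  (hindep : mutually_independent P
              (fun i : nat + nat => match i with inl n => E n | inr n => U n end))
  (hFcont : continuous F)
  (hA1 : exists K : R, forall x y, x < y -> 0 <= F y - F x <= K * (y - x))
  (hnet : (beta%:E * \int[P]_w (U 0%N w)%:E < p%:E)%E)
  (hcbar : p < cbar) :
  exists K2 K3 : R, [/\ 0 < K2, 0 < K3 &
    forall x1 x2 c, 0 <= x1 -> x1 <= x2 -> p < c -> c <= cbar ->
      (value_fun P E U p q cbar x2 c - value_fun P E U p q cbar x1 c
        <= ((K2 + K3 / (c - p)) * (x2 - x1))%:E)%E].
Proof.
exists 1, cbar; split => //; first exact: lt_trans hcbar.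
move=> x1 x2 c _ x12 pc ccbar; apply: leeBlDr_EFin.
apply: le_trans (value_fun_shift_le hbeta (ltW hp) (ltW hq) hEm hEexp hUpos hindep
  x12 pc ccbar) _.
by rewrite leeD2l // lee_fin mulrA mulrAC mulrDl mul1r lerDr subr_ge0.
Qed.
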